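(* Let $f,g\in\Lambda[t]$. Suppose there exists $n_0$ such that $f(c(2\lambda))=g(c(2\lambda))$ for all Young diagrams $\lambda$ with $|\lambda|\geq n_0$. Then $f=g$.
   Context: $\Lambda[t]$ is the algebra over ${\mathbb Q}[t]$ of symmetric functions in $x_1,x_2,\ldots$. The content of the box in row $x$ and column $y$ of a Young diagram is $y-x$, and $c(\lambda)$ is the multiset of contents of all boxes of $\lambda$. For a Young diagram $\lambda$ with $n$ boxes, $f(c(\lambda))$ is obtained by setting $t=n$, $x_i=0$ for $i>n$, and $\{x_1,\ldots,x_n\}=c(\lambda)$. $2\lambda$ is the Young diagram obtained by doubling every row length of $\lambda$, and $|\lambda|$ is the number of boxes of $\lambda$. *)

From HB Require Import structures.
From mathcomp Require Import all_boot all_order all_algebra.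
From mathcomp Require Import mpoly.
Set Implicit Arguments. Unset Strict Implicit. Unset Printing Implicit Defensive.
Import Order.TTheory GRing.Theory Num.Theory.
Local Open Scope ring_scope.

(* Lambda[t] as the graded inverse limit of symmetric polynomials:
   a family (f_n)_n with f_n a symmetric polynomial in x_1..x_n with
   coefficients in Q[t], compatible under x_{n+1} := 0, of bounded degree
   in the x-variables. *)
Definition kill_last (n : nat) (p : {mpoly {poly rat}[n.+1]}) : {mpoly {poly rat}[n]} :=
  p \mPo [tuple (match @insub nat (fun k => (k < n)%N) 'I_n (val i) with
              | Some j => 'X_j | None => 0 end : {mpoly {poly rat}[n]}) | i < n.+1].

Definition in_Lambda_t (f : forall n : nat, {mpoly {poly rat}[n]}) : Prop :=
  [/\ (forall n, f n \is symmetric),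
      (forall n, kill_last (f n.+1) = f n)
    & exists d : nat, forall n, (msize (f n) <= d)%N].

Definition is_young (la : seq nat) : bool := sorted geq la && all (fun r => 0 < r)%N la.
Definition nboxes (la : seq nat) : nat := sumn la.
Definition double_rows (la : seq nat) : seq nat := map (fun r => r.*2) la.

(* multiset of contents y - x (rows/columns 0-indexed here; differences agree) *)
Definition contents (la : seq nat) : seq int :=
  flatten [seq [seq (j%:Z - i%:Z)%R | j <- iota 0 (nth 0%N la i)] | i <- iota 0 (size la)].

(* f(c(la)): t := n, {x_1..x_n} := c(la), n = |la| *)
Definition eval_content (f : forall n : nat, {mpoly {poly rat}[n]}) (la : seq nat) : rat :=
  let n := nboxes la in
  ((f n).@[fun i : 'I_n => ((nth 0 (contents la) i)%:~R : rat)%:P]).[n%:R].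

(* Let h = f - g.  For a symmetric, stable, bounded-degree family h, the value of h along
   S ++ [a, a + c, ..., a + c (L - 1)] is a polynomial in L: appending one more term costs
   families of lower degree, and Faulhaber's formula integrates the increments.  So a
   vanishing statement that holds for arbitrarily long progressions holds for all lengths.
   Each row of a diagram contributes such a progression of contents; shortening the rows
   of doubled diagrams one at a time shows that h vanishes on the contents of any nonempty
   sequence of rows, and rows of varying length with a fixed largest content then let us
   append arbitrary natural numbers.  Padding with zeros moves t = n freely, so each h_n
   vanishes at all natural points, hence h = 0. *)

From HB Require Import structures.
From mathcomp Require Import all_boot all_order all_algebra.
From mathcomp Require Import perm mpoly.
From mathcomp Require Import ring zify.
Set Implicit Arguments. Unset Strict Implicit. Unset Printing Implicit Defensive.
Import Order.TTheory GRing.Theory Num.Theory.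
Local Open Scope ring_scope.

Section MmapMorphism.
Variables (n : nat) (R S T : nzRingType).

Lemma rmorph_mmap (f : R -> S) (h : 'I_n -> S) (phi : {rmorphism S -> T}) p :
  phi (mmap f h p) = mmap (phi \o f) (phi \o h) p.
Proof.
rewrite /mmap rmorph_sum; apply: eq_bigr => m _.
rewrite rmorphM /mmap1 rmorph_prod; congr (_ * _).
by apply: eq_bigr => i _; rewrite rmorphXn.
Qed.

Lemma eq_mmap (f1 f2 : R -> S) (h1 h2 : 'I_n -> S) p :
  f1 =1 f2 -> h1 =1 h2 -> mmap f1 h1 p = mmap f2 h2 p.
Proof.
move=> ef eh; apply: eq_bigr => m _; rewrite ef /mmap1.
by congr (_ * _); apply: eq_bigr => i _; rewrite eh.
Qed.

End MmapMorphism.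

Section MpolyLastVariable.
Variables (n : nat) (R : comNzRingType).

Lemma meval_msym (s : 'S_n) (p : {mpoly R[n]}) v :
  (msym s p).@[v] = p.@[v \o s].
Proof.
rewrite -[msym s p]comp_mpoly_id msym_mPo comp_mpoly_meval.
by apply: meval_eq => i; rewrite !tnth_mktuple mevalXU.
Qed.

Lemma rmorph_muni (S : nzRingType) (phi : {rmorphism {poly {mpoly R[n]}} -> S})
    (p : {mpoly R[n.+1]}) :
  phi (muni p) = mmap (fun c => phi (c%:MP)%:P)
    (fun i => if unlift ord_max i is Some j then phi ('X_j)%:P else phi 'X) p.
Proof.
rewrite /muni rmorph_mmap; apply: eq_mmap => // i /=.
case: splitP => j /= ej; case: unliftP => [k|] ik; rewrite ?ik ?lift_max in ej.
- by congr (phi ('X__)%:P); apply: val_inj.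
- by move: (ltn_ord j); rewrite -ej ltnn.
- by move: (ltn_ord k); rewrite ej ltnNge leq_addr.
- by [].
Qed.

Lemma meval_muni (p : {mpoly R[n.+1]}) (v : 'I_n.+1 -> R) :
  p.@[v] = (map_poly (meval (v \o lift ord_max)) (muni p)).[v ord_max].
Proof.
rewrite -horner_evalE rmorph_muni rmorph_mmap; apply: eq_mmap => [c|i] /=.
  by rewrite map_polyC horner_evalE hornerC /= mevalC.
case: unliftP => [j|] ->; rewrite horner_evalE.
  by rewrite map_polyC hornerC /= mevalXU.
by rewrite map_polyX hornerX.
Qed.

Lemma muni_inj : injective (@muni n R).
Proof.
suff muniK p : p = (map_poly (@mwiden n R) (muni p)).['X_ord_max].
  by move=> p q e; rewrite (muniK p) (muniK q) e.
rewrite -horner_evalE rmorph_muni rmorph_mmap -[p in LHS]comp_mpoly_id.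
apply: eq_mmap => [c|i] /=.
  by rewrite map_polyC horner_evalE hornerC /= mwidenC.
rewrite tnth_mktuple; case: unliftP => [j|] ->; rewrite horner_evalE.
  rewrite map_polyC hornerC /= /mwiden mmapX mmap1U.
  by congr 'X__; apply: val_inj; rewrite /= /bump leqNgt ltn_ord.
by rewrite map_polyX hornerX.
Qed.

Lemma msize_muni_coef (p : {mpoly R[n.+1]}) k :
  (msize ((muni p)`_k) <= msize p - k)%N.
Proof.
rewrite muniE coef_sum; apply: leq_trans (mmeasure_sum _ _ _ _) _.
rewrite big_seq; elim/big_ind: _ => //= [x y hx hy|m mp]; first by rewrite geq_max hx hy.
rewrite coefZ coefXn; case: eqP => [ek|_]; last by rewrite mulr0 mmeasure0.
rewrite mulr1; apply: leq_trans (msizeZ_le _ _) _; rewrite msizeX.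
have := msize_mdeg_lt mp; rewrite (mdegE m) big_ord_recr /= -ek.
have -> : mdeg [multinom m (widen_ord (leqnSn n) i) | i < n] =
          (\sum_(i < n) m (widen_ord (leqnSn n) i))%N.
  by rewrite mdegE; apply: eq_bigr => i _; rewrite mnmE.
by rewrite ltn_subRL addnC.
Qed.

End MpolyLastVariable.

Section PolynomialFunctions.
Variable T : comNzRingType.
Implicit Types (g : nat -> T).

Definition polyfun g := exists P : {poly T}, forall L, g L = P.[L%:R].

Lemma eq_polyfun g1 g2 : g1 =1 g2 -> polyfun g1 -> polyfun g2.
Proof. by move=> e [P hP]; exists P => L; rewrite -e. Qed.

Lemma polyfunC c : polyfun (fun _ => c).
Proof. by exists c%:P => L; rewrite hornerC. Qed.

Lemma polyfunXn k : polyfun (fun L => L%:R ^+ k).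
Proof. by exists ('X ^+ k) => L; rewrite hornerXn. Qed.

Lemma polyfunD g1 g2 : polyfun g1 -> polyfun g2 -> polyfun (fun L => g1 L + g2 L).
Proof. by move=> [P hP] [Q hQ]; exists (P + Q) => L; rewrite hornerD hP hQ. Qed.

Lemma polyfunN g : polyfun g -> polyfun (fun L => - g L).
Proof. by move=> [P hP]; exists (- P) => L; rewrite hornerN hP. Qed.

Lemma polyfunM g1 g2 : polyfun g1 -> polyfun g2 -> polyfun (fun L => g1 L * g2 L).
Proof. by move=> [P hP] [Q hQ]; exists (P * Q) => L; rewrite hornerM hP hQ. Qed.

Lemma polyfun_sum B (G : nat -> nat -> T) :
  (forall k, (k < B)%N -> polyfun (G k)) -> polyfun (fun L => \sum_(k < B) G k L).
Proof.
elim: B => [|B IH] polyG.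
  by apply: eq_polyfun (polyfunC 0) => L; rewrite big_ord0.
apply: eq_polyfun (polyfunD (IH _) (polyG B _)) => // [L|k ltkB].
  by rewrite big_ord_recr.
exact/polyG/ltnW.
Qed.

End PolynomialFunctions.

Lemma polyfun_rmorph (T S : comNzRingType) (phi : {rmorphism T -> S}) (g : nat -> T) :
  polyfun g -> polyfun (phi \o g).
Proof.
by move=> [P hP]; exists (map_poly phi P) => L; rewrite /= hP -horner_map rmorph_nat.
Qed.

Section SumsOfPowers.
Variable F : numFieldType.

Local Notation power_sum k L := (\sum_(i < L) (i%:R : F) ^+ k).

Lemma polyfun_power_sum k : polyfun (fun L => power_sum k L).
Proof.
elim/ltn_ind: k => k IH.
have binomial_telescope L :
    (L%:R : F) ^+ k.+1 = \sum_(q < k.+1) power_sum q L *+ 'C(k.+1, q).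
  have -> : (L%:R : F) ^+ k.+1 = \sum_(0 <= i < L) (i.+1%:R ^+ k.+1 - i%:R ^+ k.+1).
    by rewrite telescope_sumr // expr0n subr0.
  rewrite big_mkord (eq_bigr (fun i : 'I_L => \sum_(q < k.+1) (i%:R : F) ^+ q *+ 'C(k.+1, q))).
    by rewrite exchange_big; apply: eq_bigr => q _; rewrite sumrMnl.
  move=> i _; rewrite -add1n natrD exprDn big_ord_recr /= subnn expr0 mul1r binn mulr1n addrK.
  by apply: eq_bigr => q _; rewrite expr1n mul1r.
have solve_last L : power_sum k L =
    k.+1%:R^-1 * ((L%:R : F) ^+ k.+1 - \sum_(q < k) power_sum q L *+ 'C(k.+1, q)).
  rewrite binomial_telescope big_ord_recr /= addrC addrK binSn -(mulr_natl (power_sum k L)).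
  by rewrite mulKf // pnatr_eq0.
apply: eq_polyfun (fun L => esym (solve_last L)) _.
apply: polyfunM; first exact: polyfunC.
apply: polyfunD; first exact: polyfunXn.
apply: polyfunN; apply: (polyfun_sum (G := fun q L => power_sum q L *+ 'C(k.+1, q))).
move=> q ltqk; have [P hP] := IH q ltqk.
by exists (P *+ 'C(k.+1, q)) => L; rewrite hornerMn hP.
Qed.

Lemma polyfun_partial_sum (A : comAlgType F) (g : nat -> A) :
  polyfun g -> polyfun (fun L => \sum_(i < L) g i).
Proof.
move=> [P hP].
have expand L : \sum_(i < L) g i = \sum_(k < size P) P`_k * in_alg A (power_sum k L).
  under eq_bigr do rewrite hP horner_coef.
  rewrite exchange_big; apply: eq_bigr => k _.
  by rewrite rmorph_sum mulr_sumr; apply: eq_bigr => i _; rewrite rmorphXn rmorph_nat.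
apply: eq_polyfun (fun L => esym (expand L)) _.
apply: (polyfun_sum (G := fun k L => P`_k * in_alg A (power_sum k L))) => k _.
apply: polyfunM (polyfunC _) _.
exact: (polyfun_rmorph (in_alg A) (polyfun_power_sum k)).
Qed.

End SumsOfPowers.

Section NatRoots.
Variable F : idomainType.
Hypothesis natr_inj : injective (fun i : nat => i%:R : F).

Lemma poly_nat_roots_eq0 (p : {poly F}) :
  (forall N, exists2 L, (N <= L)%N & root p L%:R) -> p = 0.
Proof.
move=> roots; apply/eqP; apply: contraT => p_neq0.
have [rs [size_rs uniq_rs roots_rs]] : exists rs : seq nat,
    [/\ size rs = size p, uniq rs & all (fun i => root p i%:R) rs].
  elim: (size p) => [|k [rs [size_rs uniq_rs roots_rs]]]; first by exists [::].
  have [L max_lt_L rootL] := roots (\max_(i <- rs) i).+1.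
  exists (L :: rs); rewrite /= size_rs rootL uniq_rs andbT; split=> //.
  apply: (contraL _ max_lt_L) => L_rs; rewrite -leqNgt.
  exact: (@leq_bigmax_seq _ rs xpredT id L L_rs isT).
have := max_poly_roots p_neq0 (rs := map (fun i : nat => i%:R) rs).
rewrite all_map (map_inj_uniq natr_inj) size_map size_rs ltnn.
by apply; [apply: sub_all roots_rs | ].
Qed.

Lemma mpoly_nat_eval_eq0 n (p : {mpoly F[n]}) :
  (forall v : 'I_n -> nat, p.@[fun i => (v i)%:R] = 0) -> p = 0.
Proof.
elim: n p => [|n IH] p p_nat0.
  have := p_nat0 (fun _ => 0%N); rewrite (nvar0_mpolyC_eq p) // mevalC => ->.
  exact: mpolyC0.
apply: muni_inj; rewrite muni0; apply/polyP => k; rewrite coef0; apply: IH => v.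
suff : map_poly (meval (fun i => (v i)%:R)) (muni p) = 0.
  by move/(congr1 (coefp k)); rewrite /= coef_map coef0.
apply: poly_nat_roots_eq0 => N; exists N => //.
have := p_nat0 (fun i => if unlift ord_max i is Some j then v j else N).
rewrite meval_muni unlift_none /root => <-; apply/eqP; congr (_.[_]).
by apply: eq_map_poly => r; apply: meval_eq => i /=; rewrite liftK.
Qed.

Lemma polyfun_nat_roots_eq0 (g : nat -> F) : polyfun g ->
  (forall N, exists2 L, (N <= L)%N & g L = 0) -> forall L, g L = 0.
Proof.
move=> [P hP] roots L; rewrite hP (poly_nat_roots_eq0 (p := P)) ?horner0 //.
by move=> N; have [L' leNL' gL'0] := roots N; exists L'; rewrite // /root -hP gL'0.
Qed.

End NatRoots.

Section Families.
Variable F : numFieldType.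
Local Notation R := {poly F}.
Local Notation family := (forall n, {mpoly R[n]}).
Implicit Types (h : family) (s : seq F).

Lemma natr_poly_inj : injective (fun i : nat => i%:R : R).
Proof.
by move=> i j /= e; apply/eqP; rewrite -(eqr_nat F) -(inj_eq (@polyC_inj _)) !polyC_natr e.
Qed.

Lemma poly_nat_evalP (p q : {poly R}) : (forall z : nat, p.[z%:R] = q.[z%:R]) -> p = q.
Proof.
move=> epq; apply/eqP; rewrite -subr_eq0; apply/eqP.
apply: (poly_nat_roots_eq0 natr_poly_inj) => N; exists N => //.
by rewrite /root hornerD hornerN epq subrr.
Qed.

Definition eval_seq h s : R := (h (size s)).@[fun i => (nth 0 s i)%:P].

(* For [s] the contents of [la], setting [t := size s] is the paper's [h(c(la))]. *)
Definition eval_seq_tn h s : F := (eval_seq h s).[(size s)%:R].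

Lemma eval_seqE h s n (e : size s = n) :
  eval_seq h s = (h n).@[fun i : 'I_n => (nth 0 s i)%:P].
Proof. by case: n / e. Qed.

(* What the proof uses of an element of [Lambda[t]], read off its evaluations. *)
Definition lambda_family h D :=
  [/\ forall s s', perm_eq s s' -> eval_seq h s = eval_seq h s',
      forall s, eval_seq h (rcons s 0) = eval_seq h s
    & forall n, (msize (h n) <= D)%N].

Lemma lambda_family_mono h D1 D2 : (D1 <= D2)%N -> lambda_family h D1 -> lambda_family h D2.
Proof. by move=> le12 [h_perm h_rcons0 h_size]; split=> // n; apply: leq_trans le12. Qed.

Lemma eval_seq_tn_perm h D s s' : lambda_family h D -> perm_eq s s' ->
  eval_seq_tn h s = eval_seq_tn h s'.
Proof. by move=> [h_perm _ _] ss'; rewrite /eval_seq_tn (h_perm _ _ ss') (perm_size ss'). Qed.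

Lemma eval_seqB h1 h2 s :
  eval_seq (fun n => h1 n - h2 n) s = eval_seq h1 s - eval_seq h2 s.
Proof. exact: mevalB. Qed.

Lemma eval_seq_tnB h1 h2 s :
  eval_seq_tn (fun n => h1 n - h2 n) s = eval_seq_tn h1 s - eval_seq_tn h2 s.
Proof. by rewrite /eval_seq_tn eval_seqB hornerD hornerN. Qed.

Lemma lambda_familyB h1 h2 D1 D2 : lambda_family h1 D1 -> lambda_family h2 D2 ->
  lambda_family (fun n => h1 n - h2 n) (maxn D1 D2).
Proof.
move=> [perm1 rcons1 size1] [perm2 rcons2 size2]; split.
- by move=> s s' ss'; rewrite !eval_seqB (perm1 _ _ ss') (perm2 _ _ ss').
- by move=> s; rewrite !eval_seqB rcons1 rcons2.
- move=> n; apply: leq_trans (msizeD_le _ _) _; rewrite msizeN geq_max.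
  by rewrite (leq_trans (size1 n) (leq_maxl _ _)) (leq_trans (size2 n) (leq_maxr _ _)).
Qed.

Lemma eval_seq_cat_nseq0 h D s k :
  lambda_family h D -> eval_seq h (s ++ nseq k 0) = eval_seq h s.
Proof.
move=> [h_perm h_rcons0 _]; elim: k => [|k IH]; first by rewrite cats0.
rewrite -[RHS]IH -[RHS]h_rcons0; apply: h_perm.
by rewrite -cats1 -catA perm_cat2l /= -cat1s perm_catC.
Qed.

Definition coef_last h k : family := fun n => (muni (h n.+1))`_k.

Definition poly_last h s : {poly R} :=
  map_poly (meval (fun i : 'I_(size s) => (nth 0 s i)%:P)) (muni (h (size s).+1)).

Lemma poly_lastE h s z : (poly_last h s).[z%:P] = eval_seq h (rcons s z).
Proof.
rewrite (eval_seqE h (size_rcons s z)) (meval_muni (h (size s).+1)) /= nth_rcons ltnn eqxx.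
congr (_.[_]); apply: eq_map_poly => r; apply: meval_eq => i /=.
by rewrite /bump leqNgt ltn_ord nth_rcons ltn_ord.
Qed.

Lemma coef_poly_last h s k : (poly_last h s)`_k = eval_seq (coef_last h k) s.
Proof. by rewrite coef_map. Qed.

Lemma eq_poly_last h s s' :
  (forall z, eval_seq h (rcons s z) = eval_seq h (rcons s' z)) -> poly_last h s = poly_last h s'.
Proof. by move=> e; apply: poly_nat_evalP => z; rewrite -polyC_natr !poly_lastE. Qed.

Lemma lambda_family_coef_last h D k :
  lambda_family h D -> lambda_family (coef_last h k) (D - k).
Proof.
move=> [h_perm h_rcons0 h_size]; split.
- move=> s s' ss'; rewrite -!coef_poly_last (@eq_poly_last _ _ s') // => z.
  by apply: h_perm; rewrite -!cats1 perm_cat2r.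
- move=> s; rewrite -!coef_poly_last (@eq_poly_last _ _ s) // => z.
  rewrite -[RHS]h_rcons0; apply: h_perm; rewrite -!cats1 -!catA perm_cat2l.
  by rewrite perm_catC.
- by move=> n; apply: leq_trans (msize_muni_coef _ _) (leq_sub2r _ _).
Qed.

Lemma eval_seq_coef_last0 h D s :
  lambda_family h D -> eval_seq (coef_last h 0) s = eval_seq h s.
Proof. by move=> [_ h_rcons0 _]; rewrite -coef_poly_last -horner_coef0 -polyC0 poly_lastE. Qed.

Lemma eval_seq_rcons h D s z : lambda_family h D ->
  eval_seq h (rcons s z) = \sum_(k < D) eval_seq (coef_last h k) s * z%:P ^+ k.
Proof.
move=> hD; rewrite -poly_lastE (horner_coef_wide _ (n := D)).
  by apply: eq_bigr => k _; rewrite coef_poly_last.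
apply/leq_sizeP => k leDk; rewrite coef_poly_last /eval_seq.
have [_ _ size_coef] := lambda_family_coef_last k hD.
have /eqP -> : coef_last h k (size s) == 0.
  by rewrite -msize_poly_eq0 -leqn0 (leq_trans (size_coef _)) // leqn0 subn_eq0.
exact: meval0.
Qed.

Definition aprog (a c : F) L : seq F := [seq a + c * i%:R | i <- iota 0 L].

Lemma aprogS a c L : aprog a c L.+1 = rcons (aprog a c L) (a + c * L%:R).
Proof. by rewrite /aprog -addn1 iotaD map_cat cats1. Qed.

Lemma size_aprog a c L : size (aprog a c L) = L.
Proof. by rewrite size_map size_iota. Qed.

Lemma perm_aprog_rev a L : perm_eq (aprog a 1 L) (aprog (a + L%:R - 1) (-1) L).
Proof.
elim: L a => [|L IH] a //; rewrite aprogS mul1r.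
have -> : aprog (a + L.+1%:R - 1) (-1) L.+1 = (a + L%:R) :: aprog (a + L%:R - 1) (-1) L.
  rewrite /aprog /= mulr0 addr0 -[iota 1 L]/(iota (1 + 0) L) iotaDl -map_comp /=.
  congr (_ :: _); first by rewrite -natr1; ring.
  by apply: eq_map => i /=; rewrite -natr1 natrD; ring.
by rewrite perm_rcons perm_cons.
Qed.

Lemma polyfun_eval_seq_aprog D : forall h, lambda_family h D ->
  forall S a c, polyfun (fun L => eval_seq h (S ++ aprog a c L)).
Proof.
elim: D => [|D IH] h hD S a c.
  have [_ _ h_size] := hD; exists 0 => L; rewrite horner0 /eval_seq.
  have /eqP -> : h (size (S ++ aprog a c L)) == 0 by rewrite -msize_poly_eq0 -leqn0.
  exact: meval0.
(* Appending the next term [a + c L] changes the value by lower-degree families times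
   powers of [a + c L]; by induction these increments are polynomial in [L]. *)
pose step L := \sum_(k < D)
  eval_seq (coef_last h k.+1) (S ++ aprog a c L) * ((a + c * L%:R)%:P : R) ^+ k.+1.
have eval_succ L : eval_seq h (S ++ aprog a c L.+1) = eval_seq h (S ++ aprog a c L) + step L.
  rewrite aprogS -rcons_cat (eval_seq_rcons _ _ hD) big_ord_recl /=.
  by rewrite (eval_seq_coef_last0 _ hD) expr0 mulr1.
have eval_sum L :
    eval_seq h (S ++ aprog a c L) = eval_seq h (S ++ aprog a c 0) + \sum_(i < L) step i.
  by elim: L => [|L IHL]; rewrite ?big_ord0 ?addr0 // eval_succ IHL big_ord_recr addrA.
apply: eq_polyfun (fun L => esym (eval_sum L)) _.
apply/polyfunD/polyfun_partial_sum; first exact: polyfunC.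
apply: (polyfun_sum (G := fun k L => eval_seq (coef_last h k.+1) (S ++ aprog a c L) *
  ((a + c * L%:R)%:P : R) ^+ k.+1)) => k _.
apply: polyfunM.
  apply: IH; apply: lambda_family_mono (lambda_family_coef_last k.+1 hD).
  by rewrite subSS leq_subr.
exists (((a%:P)%:P + (c%:P)%:P * 'X) ^+ k.+1) => L.
by rewrite horner_exp hornerD hornerM !hornerC hornerX polyCD polyCM polyC_natr.
Qed.

Lemma polyfun_eval_seq_tn_aprog h D S a c : lambda_family h D ->
  polyfun (fun L => eval_seq_tn h (S ++ aprog a c L)).
Proof.
move=> hD; have [P hP] := polyfun_eval_seq_aprog hD S a c.
exists (\sum_(k < size P) (P`_k \Po ('X + (size S)%:R%:P)) * 'X ^+ k) => L.
rewrite /eval_seq_tn hP size_cat size_aprog (horner_coef P) !horner_sum.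
apply: eq_bigr => k _; rewrite !hornerM horner_comp hornerD hornerX hornerC.
by rewrite -polyC_natr -rmorphXn hornerC hornerXn natrD addrC.
Qed.

Lemma eval_seq_tn_aprog_eq0 h D S a c : lambda_family h D ->
  (forall N, exists2 L, (N <= L)%N & eval_seq_tn h (S ++ aprog a c L) = 0) ->
  forall L, eval_seq_tn h (S ++ aprog a c L) = 0.
Proof.
move=> hD; apply: polyfun_nat_roots_eq0 (polyfun_eval_seq_tn_aprog S a c hD).
exact: mulrIn (oner_neq0 F).
Qed.

End Families.

Lemma contents_cat la lb :
  contents (la ++ lb) = contents la ++ [seq c - (size la)%:Z | c <- contents lb].
Proof.
rewrite /contents size_cat iotaD map_cat flatten_cat add0n; congr (_ ++ _).
  apply/congr1/eq_in_map => i; rewrite mem_iota add0n => /andP[_ lti].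
  by rewrite nth_cat lti.
rewrite -[size la]addn0 iotaDl addn0 -map_comp map_flatten -map_comp.
apply/congr1/eq_map => i /=; rewrite nth_cat ltnNge leq_addr /= addKn -map_comp.
by apply: eq_map => j /=; rewrite PoszD opprD addrA addrAC.
Qed.

Lemma contents1 x : contents [:: x] = [seq j%:Z | j <- iota 0 x].
Proof. by rewrite /contents /= cats0; apply: eq_map => j; rewrite subr0. Qed.

Lemma contents_nseq0 z : contents (nseq z 0%N) = [::].
Proof.
by rewrite /contents size_nseq; elim: (iota 0 z) => //= i s ->; rewrite nth_nseq if_same.
Qed.

Lemma size_contents la : size (contents la) = sumn la.
Proof.
elim/last_ind: la => [|la x IH] //; rewrite -cats1 contents_cat size_cat size_map IH contents1.
by rewrite size_map size_iota sumn_cat /= addn0.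
Qed.

Section ContentsInField.
Variable F : numFieldType.

Definition contentsF la : seq F := [seq c%:~R | c <- contents la].

Lemma contentsF_cat_nseq0 la z : contentsF (la ++ nseq z 0%N) = contentsF la.
Proof. by rewrite /contentsF contents_cat contents_nseq0 cats0. Qed.

Lemma perm_contentsF_row pre x post :
  perm_eq (contentsF (pre ++ x :: post))
          (contentsF (pre ++ 0%N :: post) ++ aprog (- (size pre)%:R) 1 x).
Proof.
rewrite /contentsF -[x :: post]cat1s -[0%N :: post]cat1s !contents_cat contents1 /=.
rewrite !map_cat -catA perm_cat2l perm_catC perm_cat2l.
rewrite /aprog -!map_comp (@eq_map _ _ _ (fun j => - (size pre)%:R + 1 * j%:R)) ?perm_refl //.
by move=> j /=; rewrite rmorphB /= mul1r addrC.
Qed.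

End ContentsInField.

Lemma is_young_cons m mu :
  is_young mu -> (0 < m)%N -> (head 0%N mu <= m)%N -> is_young (m :: mu).
Proof.
rewrite /is_young => /andP[sorted_mu pos_mu] m_gt0 head_le /=; rewrite m_gt0 pos_mu andbT.
by case: mu sorted_mu head_le {pos_mu} => //= y mu -> ->.
Qed.

Section Vanishing.
Variables (F : numFieldType) (h : forall n, {mpoly {poly F}[n]}) (D n0 : nat).
Hypothesis hD : lambda_family h D.
Hypothesis h_young : forall la, is_young la -> (n0 <= nboxes la)%N ->
  eval_seq_tn h (contentsF F (double_rows la)) = 0.

Lemma eval_rows_double_young_eq0 pre mu :
  is_young mu -> (pre != [::]) || (n0 <= nboxes mu)%N ->
  eval_seq_tn h (contentsF F (pre ++ double_rows mu)) = 0.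
Proof.
elim/last_ind: pre mu => [|pre x IH] mu young_mu large; first exact: h_young.
(* The last row of [pre] contributes a progression of length [x]; for [x = 2 m] with [m]
   large, [pre ++ double_rows (m :: mu)] is covered by induction. *)
rewrite cat_rcons (eval_seq_tn_perm hD (perm_contentsF_row F _ _ _)).
apply: (eval_seq_tn_aprog_eq0 hD) => N.
pose m := maxn (maxn N 1) (maxn n0 (head 0%N mu)).
exists m.*2; first by rewrite /m; lia.
rewrite -(eval_seq_tn_perm hD (perm_contentsF_row F _ _ _)).
apply: (IH (m :: mu)); first by apply: is_young_cons; rewrite // /m; lia.
by rewrite orbC /nboxes /= /m; apply/orP; left; lia.
Qed.

Lemma eval_rows_eq0 la : la != [::] -> eval_seq_tn h (contentsF F la) = 0.
Proof.
by move=> la_neq0; rewrite -[la]cats0 (eval_rows_double_young_eq0 (mu := [::])) ?la_neq0.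
Qed.

Lemma eval_rows_cat_nat_eq0 X la : la != [::] ->
  eval_seq_tn h (contentsF F la ++ [seq b%:R | b <- X]) = 0.
Proof.
elim: X la => [|b X IH] la la_neq0; first by rewrite cats0 eval_rows_eq0.
set S := contentsF F la ++ [seq b%:R | b <- X].
(* A row of length [L'] at index [L' - b - 1] has contents [b - L' + 1, ..., b]: an interval
   with top [b] and arbitrary length, the length-one case being the singleton [b]. *)
have vanish L : eval_seq_tn h (S ++ aprog b%:R (-1) L) = 0.
  apply: (eval_seq_tn_aprog_eq0 hD) => N.
  pose L' := (size la + b + N).+1; pose r := (L' - b.+1)%N.
  exists L'; first by rewrite /L'; lia.
  have r_ge : (size la <= r)%N by rewrite /r /L'; lia.
  pose la' := la ++ nseq (r - size la) 0%N ++ [:: L'].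
  rewrite -(IH la'); last by rewrite /la' -size_eq0 !size_cat /= addn1 addnS.
  rewrite /la' catA.
  apply: (eval_seq_tn_perm hD); rewrite perm_sym.
  apply: perm_trans (perm_cat (perm_contentsF_row F _ _ _) (perm_refl _)) _.
  rewrite -[[:: 0%N]]/(nseq 1 0%N) -(catA la) -nseqD contentsF_cat_nseq0.
  rewrite size_cat size_nseq subnKC //.
  rewrite /S -!catA perm_cat2l perm_catC perm_cat2l.
  apply: perm_trans (perm_aprog_rev _ _) _.
  suff -> : - r%:R + L'%:R - 1 = b%:R :> F by [].
  by rewrite /r natrB /L' ?mulrSr; [ring | lia].
rewrite -(vanish 1%N); apply: (eval_seq_tn_perm hD).
by rewrite /S /aprog /= mulr0 addr0 -catA perm_cat2l perm_sym cats1 perm_rcons perm_refl.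
Qed.

Lemma eval_seq_nat_eq0 X : eval_seq h [seq b%:R | b <- X] = 0.
Proof.
apply: (poly_nat_roots_eq0 (mulrIn (oner_neq0 F))) => N.
exists (size X + N)%N; first exact: leq_addl.
have := eval_rows_cat_nat_eq0 (X ++ nseq N 0%N) (la := [:: 0%N]) isT.
rewrite map_cat map_nseq /eval_seq_tn (eval_seq_cat_nseq0 _ _ hD) /root.
by rewrite !size_cat !size_map size_nseq /= add0n => /eqP.
Qed.

Lemma lambda_family_eq0 n : h n = 0.
Proof.
apply: (mpoly_nat_eval_eq0 (@natr_poly_inj F)) => v.
have := eval_seq_nat_eq0 [seq v i | i <- enum 'I_n].
rewrite (eval_seqE h (_ : _ = n)) ?size_map -?enumT ?size_enum_ord // => <-.
apply: meval_eq => i; rewrite -map_comp (nth_map i) ?size_enum_ord // nth_ord_enum.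
by rewrite polyC_natr.
Qed.
End Vanishing.

Lemma lambda_family_in_Lambda_t f : in_Lambda_t f -> exists D, lambda_family f D.
Proof.
move=> [f_sym f_kill [D f_size]]; exists D; split=> //.
- move=> s s' ss'; rewrite (eval_seqE f (esym (perm_size ss'))).
  have /tuple_permP [sg ->] : perm_eq s' (in_tuple s) by rewrite perm_sym.
  rewrite /eval_seq -[f (size s) in LHS](issymP _ (f_sym (size s)) sg) meval_msym.
  by apply: meval_eq => i /=; rewrite (nth_map i) ?size_enum_ord // nth_ord_enum (tnth_nth 0).
- move=> s; rewrite (eval_seqE f (size_rcons s 0)) /eval_seq -[in RHS]f_kill.
  rewrite /kill_last comp_mpoly_meval; apply: meval_eq => i; rewrite tnth_mktuple.
  case: insubP => [j lt_in val_j|ge_in] /=; first by rewrite mevalXU nth_rcons val_j lt_in.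
  have -> : val i = size s by apply/eqP; rewrite eqn_leq -ltnS ltn_ord leqNgt ge_in.
  by rewrite meval0 nth_rcons ltnn eqxx polyC0.
Qed.

Lemma eval_contentE f la : eval_content f la = eval_seq_tn f (contentsF rat la).
Proof.
have size_la : size (contentsF rat la) = nboxes la by rewrite size_map size_contents.
rewrite /eval_seq_tn (eval_seqE f size_la) size_la; congr (_.[_]); apply: meval_eq => i.
by rewrite (nth_map 0) // size_contents.
Qed.

Theorem corollary4p3 (f g : forall n : nat, {mpoly {poly rat}[n]}) :
  in_Lambda_t f -> in_Lambda_t g ->
  (exists n0 : nat, forall la : seq nat, is_young la -> (n0 <= nboxes la)%N ->
     eval_content f (double_rows la) = eval_content g (double_rows la)) ->
  forall n, f n = g n.
Proof.
move=> /lambda_family_in_Lambda_t [Df f_fam] /lambda_family_in_Lambda_t [Dg g_fam] [n0 fg] n.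
apply/subr0_eq/(lambda_family_eq0 (lambda_familyB f_fam g_fam) (n0 := n0)).
move=> la young_la large_la.
by rewrite eval_seq_tnB -!eval_contentE fg ?subrr.
Qed.
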